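(* For every integer $n\ge 2$ and every real number $p\in(0,1)$, \[ (n-2)\bigl(n^p-(n-1)^p\bigr)^{1/(1-p)}+1\le (n-1)^{p/(1-p)}. \] *)

From Stdlib Require Import Reals.

(* Put m = n - 1. By the mean value theorem (m+1)^p - m^p <= p m^(p-1), so raising it to
   the power 1/(1-p) >= 1 gives at most p^(1/(1-p)) / m <= p / m. The left-hand side is thus
   at most 1 + p (1 - 1/m) <= 1 + p/(1-p) ln m <= exp (p/(1-p) ln m) = m^(p/(1-p)). *)

From Stdlib Require Import Reals Lra.
Open Scope R_scope.

Lemma Rpower_pos (x e : R) : 0 < Rpower x e.
Proof. apply exp_pos. Qed.

Lemma Rpower_succ_sub_bounds (m p : R) :
  0 < m -> 0 < p <= 1 ->
  0 < Rpower (m + 1) p - Rpower m p <= p * Rpower m (p - 1).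
Proof.
  intros Hm Hp.
  destruct (MVT_cor2 (fun x => Rpower x p) (fun x => p * Rpower x (p - 1)) m (m + 1))
    as [c [Hd Hc]]; [lra | intros x Hx; apply derivable_pt_lim_power; lra |].
  rewrite Hd; replace (m + 1 - m) with 1 by ring; rewrite Rmult_1_r.
  split; [apply Rmult_lt_0_compat; [lra | apply Rpower_pos] |].
  apply Rmult_le_compat_l; [lra |].
  (* [x^(p-1) = 1 / x^(1-p)] with [1 - p >= 0] is nonincreasing in [x]. *)
  replace (p - 1) with (- (1 - p)) by ring; rewrite !Rpower_Ropp.
  apply Rinv_le_contravar; [apply Rpower_pos |].
  apply Rle_Rpower_l; lra.
Qed.

Lemma Rpower_le_self (x e : R) : 0 < x <= 1 -> 1 <= e -> Rpower x e <= x.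
Proof.
  intros Hx He.
  assert (Hinv : Rpower (/ x) e = / Rpower x e).
  { unfold Rpower; rewrite ln_Rinv by lra.
    replace (e * - ln x) with (- (e * ln x)) by ring; apply exp_Ropp. }
  assert (Hle : / x <= / Rpower x e).
  { rewrite <- Hinv, <- (Rpower_1 (/ x)) at 1 by (apply Rinv_0_lt_compat; lra).
    apply Rle_Rpower; [| lra].
    rewrite <- Rinv_1; apply Rinv_le_contravar; lra. }
  apply Rinv_le_contravar in Hle; [| apply Rinv_0_lt_compat; lra].
  rewrite !Rinv_inv in Hle; exact Hle.
Qed.

Lemma Rpower_succ_sub_Rpower_inv_le (m p : R) :
  0 < m -> 0 < p < 1 ->
  Rpower (Rpower (m + 1) p - Rpower m p) (1 / (1 - p)) <= p / m.
Proof.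
  intros Hm Hp.
  destruct (Rpower_succ_sub_bounds m p) as [Hd0 Hd]; [lra | lra |].
  assert (He : 1 <= 1 / (1 - p)).
  { apply (Rmult_le_reg_r (1 - p)); [lra |].
    replace (1 / (1 - p) * (1 - p)) with 1 by (field; lra); lra. }
  apply Rle_trans with (Rpower (p * Rpower m (p - 1)) (1 / (1 - p))).
  { apply Rle_Rpower_l; lra. }
  rewrite <- Rpower_mult_distr, Rpower_mult by (try apply Rpower_pos; lra).
  replace ((p - 1) * (1 / (1 - p))) with (Ropp 1) by (field; lra).
  rewrite Rpower_Ropp, Rpower_1 by lra.
  apply Rmult_le_compat_r; [apply Rlt_le, Rinv_0_lt_compat; lra |].
  apply Rpower_le_self; lra.
Qed.

Lemma one_sub_inv_le_ln (m : R) : 0 < m -> 1 - / m <= ln m.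
Proof.
  intros Hm; pose proof (exp_ineq1_le (- ln m)) as H.
  rewrite exp_Ropp, exp_ln in H by lra; lra.
Qed.

Theorem lemma5 (n : nat) (p : R) (hn : (2 <= n)%nat) (hp0 : 0 < p) (hp1 : p < 1) :
  (INR n - 2) * Rpower (Rpower (INR n) p - Rpower (INR n - 1) p) (1 / (1 - p)) + 1
    <= Rpower (INR n - 1) (p / (1 - p)).
Proof.
  assert (Hn : 2 <= INR n) by (apply (le_INR 2) in hn; simpl in hn; lra).
  set (m := INR n - 1).
  replace (INR n) with (m + 1) by (unfold m; ring).
  replace (m + 1 - 2) with (m - 1) by ring.
  assert (Hm : 1 <= m) by (unfold m; lra).
  clearbody m.
  pose proof (Rpower_succ_sub_Rpower_inv_le m p ltac:(lra) ltac:(lra)) as HT.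
  pose proof (one_sub_inv_le_ln m ltac:(lra)) as Hln.
  assert (Hinv : / m <= 1) by (rewrite <- Rinv_1; apply Rinv_le_contravar; lra).
  assert (Hq : p <= p / (1 - p)).
  { apply (Rmult_le_reg_r (1 - p)); [lra |].
    replace (p / (1 - p) * (1 - p)) with p by (field; lra); nra. }
  pose proof (exp_ineq1_le (p / (1 - p) * ln m)) as Hexp.
  apply Rle_trans with ((m - 1) * (p / m) + 1).
  { apply Rplus_le_compat_r, Rmult_le_compat_l; lra. }
  replace ((m - 1) * (p / m)) with (p * (1 - / m)) by (field; lra).
  unfold Rpower; nra.
Qed.
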